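(* Let $\pi>0$, $\bar d>0$, $0<\theta_1<\dots<\theta_K$, $0\le\beta_1<\dots<\beta_M\le1$, and let $A:[0,D]\to[0,\bar d]$ be continuously differentiable. Enumerate the $KM$ types $(\beta_m,\theta_k)$ as $\Lambda_1,\dots,\Lambda_{KM}$; write $L(Q,\beta,\theta)=\theta[\bar d-\beta A(Q)]-\pi(1-\beta)A(Q)$, $\bar S(Q,\Pi,\Lambda)=L(Q,\Lambda)-\Pi$ and $\sigma(Q,\beta,\theta)=-[\theta\beta+\pi(1-\beta)]A'(Q)$. Let $\Phi=\{(Q_i,\Pi_i)\}_{i=1}^{KM}$ with $Q_i\in[0,D]$ be a feasible contract, i.e. $\bar S(Q_i,\Pi_i,\Lambda_i)\ge0$ for all $i$ and $\bar S(Q_i,\Pi_i,\Lambda_i)\ge\bar S(Q_j,\Pi_j,\Lambda_i)$ for all $i\ne j$. If $\sigma(Q,\Lambda_i)>\sigma(Q,\Lambda_j)$ for all $Q\in[0,D]$, then $Q_i\ge Q_j$.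
   Context: Model: an operator offers one item (data cap $Q_i$, subscription fee $\Pi_i$) for each user type $\Lambda_i=(\beta,\theta)$ (network substitutability $\beta$, data valuation $\theta$). $\pi$ is the overage price, $\bar d$ the mean demand, $A(Q)$ the expected overage consumption under cap $Q$ (decreasing, convex). $L$ is the virtual payoff, $\bar S$ the expected payoff, and $\sigma=\partial L/\partial Q$ is the user's willingness-to-pay (marginal rate of substitution). *)

From Stdlib Require Import Reals Lra.
From Coquelicot Require Import Coquelicot.
From mathcomp Require Import ssreflect ssrfun ssrbool eqtype ssrnat fintype.
Open Scope R_scope.

Definition Lpay (pi dbar : R) (A : R -> R) (Q beta theta : R) : R :=
  theta * (dbar - beta * A Q) - pi * (1 - beta) * A Q.

Definition Spay (pi dbar : R) (A : R -> R) (Q Pi beta theta : R) : R :=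
  Lpay pi dbar A Q beta theta - Pi.

Definition wtp (pi : R) (A : R -> R) (Q beta theta : R) : R :=
  - (theta * beta + pi * (1 - beta)) * Derive A Q.

From Stdlib Require Import Reals Lra.
From Coquelicot Require Import Coquelicot.
From mathcomp Require Import ssreflect ssrfun ssrbool eqtype ssrnat fintype.
Open Scope R_scope.

(* Adding the incentive constraints of types i and j against each other
   cancels the fees and gives g (Q i) >= g (Q j) for
   g Q := L(Q, Lambda_i) - L(Q, Lambda_j).  Since dL/dQ = sigma, the derivative
   of g is sigma_i - sigma_j > 0 on [0, D], so g is strictly increasing there
   and Q i >= Q j. *)

Lemma is_derive_Lpay (pi dbar : R) (A : R -> R) (beta theta x : R) :
  ex_derive A x ->
  is_derive (fun Q => Lpay pi dbar A Q beta theta) x (wtp pi A x beta theta).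
Proof.
move=> dA; rewrite /Lpay /wtp.
auto_derive => //.
(* auto_derive differentiates the eta-expansion of A *)
rewrite -[Derive (fun y => A y) x]/(Derive A x).
ring.
Qed.

Lemma Lpay_sub_increasing {pi : R} (dbar : R) {D : R} {A : R -> R}
    {b1 t1 b2 t2 : R} :
  (forall x, 0 <= x <= D -> ex_derive A x) ->
  (forall x, 0 <= x <= D -> wtp pi A x b1 t1 > wtp pi A x b2 t2) ->
  forall x y, 0 <= x -> x < y -> y <= D ->
    Lpay pi dbar A x b1 t1 - Lpay pi dbar A x b2 t2
    < Lpay pi dbar A y b1 t1 - Lpay pi dbar A y b2 t2.
Proof.
move=> dA wtp_gt x y x_ge0 lt_xy y_leD.
apply: (incr_function_le
          (fun Q => Lpay pi dbar A Q b1 t1 - Lpay pi dbar A Q b2 t2)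
          (Rbar.Finite 0) (Rbar.Finite D)
          (fun Q => wtp pi A Q b1 t1 - wtp pi A Q b2 t2)) => //=.
- move=> Q Q_ge0 Q_leD.
  by apply: is_derive_minus; apply: is_derive_Lpay; apply: dA.
- move=> Q Q_ge0 Q_leD.
  by have := wtp_gt Q (conj Q_ge0 Q_leD); lra.
Qed.

Lemma incentive_constraints_add {pi dbar : R} {A : R -> R}
    {Q1 Pi1 b1 t1 Q2 Pi2 b2 t2 : R} :
  Spay pi dbar A Q1 Pi1 b1 t1 >= Spay pi dbar A Q2 Pi2 b1 t1 ->
  Spay pi dbar A Q2 Pi2 b2 t2 >= Spay pi dbar A Q1 Pi1 b2 t2 ->
  Lpay pi dbar A Q2 b1 t1 - Lpay pi dbar A Q2 b2 t2
  <= Lpay pi dbar A Q1 b1 t1 - Lpay pi dbar A Q1 b2 t2.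
Proof. rewrite /Spay; lra. Qed.

Lemma cap_monotone_in_wtp {pi dbar D : R} {A : R -> R}
    {Q1 Pi1 b1 t1 Q2 Pi2 b2 t2 : R} :
  (forall x, 0 <= x <= D -> ex_derive A x) ->
  (forall x, 0 <= x <= D -> wtp pi A x b1 t1 > wtp pi A x b2 t2) ->
  0 <= Q1 <= D -> 0 <= Q2 <= D ->
  Spay pi dbar A Q1 Pi1 b1 t1 >= Spay pi dbar A Q2 Pi2 b1 t1 ->
  Spay pi dbar A Q2 Pi2 b2 t2 >= Spay pi dbar A Q1 Pi1 b2 t2 ->
  Q1 >= Q2.
Proof.
move=> dA wtp_gt Q1_in Q2_in IC1 IC2.
apply: Rnot_lt_ge => lt_Q12.
have := Lpay_sub_increasing dbar dA wtp_gt Q1 Q2 (proj1 Q1_in) lt_Q12 (proj2 Q2_in).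
have := incentive_constraints_add IC1 IC2.
lra.
Qed.

Theorem lemma4
  (pi dbar D : R) (K M : nat)
  (theta : 'I_K -> R) (beta : 'I_M -> R) (A : R -> R)
  (e : 'I_(K * M) -> 'I_M * 'I_K)
  (Q Pi : 'I_(K * M) -> R) :
  0 < pi -> 0 < dbar ->
  (forall k : 'I_K, 0 < theta k) ->
  (forall k1 k2 : 'I_K, (k1 < k2)%N -> theta k1 < theta k2) ->
  (forall m : 'I_M, 0 <= beta m <= 1) ->
  (forall m1 m2 : 'I_M, (m1 < m2)%N -> beta m1 < beta m2) ->
  (forall x, 0 <= x <= D -> 0 <= A x <= dbar) ->
  (forall x, 0 <= x <= D -> ex_derive A x /\ continuous (Derive A) x) ->
  bijective e ->
  (forall i, 0 <= Q i <= D) ->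
  (forall i, 0 <= Spay pi dbar A (Q i) (Pi i) (beta (e i).1) (theta (e i).2)) ->
  (forall i j, i <> j ->
     Spay pi dbar A (Q i) (Pi i) (beta (e i).1) (theta (e i).2)
     >= Spay pi dbar A (Q j) (Pi j) (beta (e i).1) (theta (e i).2)) ->
  forall i j : 'I_(K * M),
    (forall x, 0 <= x <= D ->
       wtp pi A x (beta (e i).1) (theta (e i).2)
       > wtp pi A x (beta (e j).1) (theta (e j).2)) ->
    Q i >= Q j.
Proof.
move=> _ _ _ _ _ _ _ A_C1 _ Q_in _ IC i j wtp_gt.
have [<- | neq_ij] := eqVneq i j; first exact: Rge_refl.
have dA x (x_in : 0 <= x <= D) : ex_derive A x by case: (A_C1 x x_in).
apply: (cap_monotone_in_wtp dA wtp_gt (Q_in i) (Q_in j)).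
- by apply: IC; apply/eqP.
- by apply: IC; apply/eqP; rewrite eq_sym.
Qed.
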